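(* Fix $i_1,\dots,i_m\in\{1,\dots,n\}$ and integers $a,r,t\ge0$, $s\ge1$ with $2a+s+r+t=m$. If $r=0$, then $$\operatorname{ad}(X)\big([\eta^ax^s\partial^t;i_1,\dots,i_m]\big)=\tfrac{\sqrt{-1}}{\sqrt2}\,[\eta^ax^{s-1}\gamma\,\partial^t;i_1,\dots,i_m],$$ and if $r=1$, then $$\operatorname{ad}(X)\big([\eta^ax^s\gamma\,\partial^t;i_1,\dots,i_m]\big)=\tfrac{2\sqrt{-1}(a+1)}{\sqrt2}[\eta^{a+1}x^{s-1}\partial^t;i_1,\dots,i_m]+\tfrac{2\sqrt{-1}(t+1)}{\sqrt2}[\eta^ax^s\partial^{t+1};i_1,\dots,i_m].$$
   Context: Fix $n\ge1$ and an invertible complex matrix $\eta=(\eta^{ij})$ with $\eta^{ij}=\eta^{ji}$. $W(2n|n)$ is the associative superalgebra generated by even $x^1,\dots,x^n,\partial_1,\dots,\partial_n$ and odd $\gamma^1,\dots,\gamma^n$ with relations $x^ix^j=x^jx^i$, $\partial_i\partial_j=\partial_j\partial_i$, $\partial_ix^j-x^j\partial_i=\delta_i^j$, $\gamma^i$ commuting with all $x^j,\partial_j$, $\gamma^i\gamma^j+\gamma^j\gamma^i=2\eta^{ij}$; $\partial^i:=\eta^{ij}\partial_j$ (summed). $X=\frac{\sqrt{-1}}{\sqrt2}\gamma^i\partial_i$ and $\operatorname{ad}(X)(b)=Xb-(-1)^{|b|}bX$ for homogeneous $b$ (supercommutator). Bracket symbol: for integers $a,p,q,t\ge0$ with $2a+p+q+t=m$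 (exponents of $\eta,x,\gamma,\partial$) and indices $i_1,\dots,i_m$, for $\sigma\in S_m$ put $T_\sigma:=\prod_{k=0}^{a-1}\eta^{i_{\sigma(2k+1)}i_{\sigma(2k+2)}}\cdot x^{i_{\sigma(2a+1)}}\cdots x^{i_{\sigma(2a+p)}}\cdot\gamma^{i_{\sigma(2a+p+1)}}\cdots\gamma^{i_{\sigma(2a+p+q)}}\cdot\partial^{i_{\sigma(2a+p+q+1)}}\cdots\partial^{i_{\sigma(m)}}$ and $[\eta^ax^p\gamma^q\partial^t;i_1,\dots,i_m]:=\frac1{2^a a!p!t!}\sum_{\sigma\in S_m}T_\sigma$ (factors with exponent $0$ omitted; the symbol is $0$ if the exponent of $x$ is negative). *)

From HB Require Import structures.
From mathcomp Require Import all_boot all_order all_fingroup all_algebra.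
Set Implicit Arguments. Unset Strict Implicit. Unset Printing Implicit Defensive.
Import Order.TTheory GRing.Theory Num.Theory.
Local Open Scope ring_scope.

(* W(2n|n) is presented by generators and relations; an identity holds in it
   iff it holds in every C-algebra A with elements x_i, d_i (= partial_i),
   g_i (= gamma^i) satisfying the defining relations.  *)
Section W.
Variables (C : numClosedFieldType) (A : algType C) (n : nat).
Variables (eta : 'M[C]_n) (x d g : 'I_n -> A).

Definition Wrel : Prop :=
  (forall i j, x i * x j = x j * x i) /\
  (forall i j, d i * d j = d j * d i) /\
  (forall i j, d i * x j - x j * d i = (i == j)%:R) /\
  (forall i j, g i * x j = x j * g i) /\
  (forall i j, g i * d j = d j * g i) /\
  (forall i j, g i * g j + g j * g i = (2 * eta i j)%:A).

Definition dup (i : 'I_n) : A := \sum_(j < n) eta i j *: d j.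

Definition Xop : A := ('i / sqrtC 2) *: \sum_(i < n) g i * d i.

Definition adX (par : bool) (b : A) : A := Xop * b - (-1) ^+ par * b * Xop.

Definition optf (f : 'I_n -> A) (o : option 'I_n) : A :=
  if o is Some i then f i else 1.
Definition opte (o1 o2 : option 'I_n) : C :=
  if (o1, o2) is (Some i, Some j) then eta i j else 1.

(* the bracket symbol [eta^a x^p gamma^q partial^t ; i_1..i_m] *)
Definition bracket (m : nat) (idx : 'I_m -> 'I_n) (a p q t : nat) : A :=
  let si (s : 'S_m) (j : nat) : option 'I_n :=
    if insub j is Some k then Some (idx (s k)) else None in
  ((2 ^ a * a`! * p`! * t`!)%N%:R)^-1 *:
  \sum_(s : 'S_m)
    ((\prod_(k < a) opte (si s (2 * k)%N) (si s (2 * k + 1)%N)) *: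
     ((\prod_(k < p) optf x (si s (2 * a + k)%N)) *
      (\prod_(k < q) optf g (si s (2 * a + p + k)%N)) *
      (\prod_(k < t) optf dup (si s (2 * a + p + q + k)%N)))).
End W.

From HB Require Import structures.
From mathcomp Require Import all_boot all_order all_fingroup all_algebra.
From mathcomp Require Import zify ring.
Import Order.TTheory GRing.Theory Num.Theory.
Local Open Scope ring_scope.
Set Implicit Arguments. Unset Strict Implicit. Unset Printing Implicit Defensive.

(* ad(X) acts on a term T_σ of the bracket through [∂_i, x^j] = δ_i^j and
   γ^i γ^j + γ^j γ^i = 2 η^{ij}.  For r = 0 it replaces one of the s letters x
   by γ; for r = 1 it either does the same, producing γγ, or turns γ into ∂.
   Summed over σ ∈ S_m, each contraction is again the sum defining a bracket,
   after reindexing S_m by the permutation of positions that moves the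
   contracted letter into its slot; in the γγ case, reindexing by the
   transposition of the two γ positions symmetrizes γγ into η.  The factors
   s, 2(a+1) and 2(t+1) come from comparing the normalizations
   1/(2^a a! p! t!). *)

(* [u \o move K J] is the word [u] with its letter at position [K] taken out
   and reinserted at position [J]. *)
Definition move (K J l : nat) : nat :=
  if l == J then K else bump K (unbump J l).

Ltac lia_move := rewrite /move /bump /unbump; repeat case: eqP; lia.

Lemma move_lt K J p l : (K < p)%N -> (J < p)%N -> (l < p)%N -> (move K J l < p)%N.
Proof. by lia_move. Qed.

Lemma move_id K J l : (K < l)%N -> (J < l)%N -> move K J l = l.
Proof. by lia_move. Qed.

Lemma move_small K J l : (l < K)%N -> (l < J)%N -> move K J l = l.
Proof. by lia_move. Qed.

Lemma move_inj K J : injective (move K J).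
Proof. by move=> l1 l2; lia_move. Qed.

Section Words.
Variables (n m : nat) (idx : 'I_m -> 'I_n) (i0 : 'I_n).

(* [word s l] is the index at position [l] of T_s; positions [l >= m] carry
   the junk index [i0]. *)
Definition word (s : 'S_m) (l : nat) : 'I_n :=
  if insub l is Some k then idx (s k) else i0.

Lemma sum_word_transport (V : nmodType) (F G : (nat -> 'I_n) -> V)
    (rho : nat -> nat) :
  (forall l, (l < m)%N -> (rho l < m)%N) ->
  (forall l, (m <= l)%N -> rho l = l) ->
  {in gtn m &, injective rho} ->
  (forall u v, (forall l, v l = u (rho l)) -> F v = G u) ->
  \sum_(s : 'S_m) F (word s) = \sum_(s : 'S_m) G (word s).
Proof.
move=> rho_lt rho_id rho_inj FG.
pose f (k : 'I_m) : 'I_m := insubd k (rho k).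
have fE k : val (f k) = rho k by rewrite val_insubd rho_lt.
have f_inj : injective f.
  move=> k1 k2 /(congr1 val); rewrite !fE => /rho_inj e.
  by apply: val_inj; apply: e; rewrite inE ltn_ord.
rewrite (reindex_inj (mulgI (perm f_inj))); apply: eq_bigr => s _.
apply: FG => l; rewrite /word; case: insubP => [k _ kE|].
  by rewrite permM permE -kE -fE valK.
by rewrite -leqNgt => ml; rewrite rho_id // insubN // -leqNgt.
Qed.

Lemma sum_word_move (V : nmodType) (F G : (nat -> 'I_n) -> V) K J :
    (K < m)%N -> (J < m)%N ->
    (forall u v, (forall l, v l = u (move K J l)) -> F v = G u) ->
  \sum_(s : 'S_m) F (word s) = \sum_(s : 'S_m) G (word s).
Proof.
move=> Km Jm; apply: sum_word_transport => [l|l ml|]; first exact: move_lt.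
  by rewrite move_id // (leq_trans _ ml).
exact: in2W (@move_inj K J).
Qed.

End Words.

Section Lie.
Variable R : ringType.
Implicit Types u v w : R.

Definition lie u v : R := u * v - v * u.

Lemma lieMr u v w : lie u (v * w) = lie u v * w + v * lie u w.
Proof. by rewrite /lie mulrBl mulrBr !mulrA addrA subrK. Qed.

Lemma lie_prod_bump u (F : nat -> R) (c : nat -> nat) p :
    (forall l, lie u (F l) = (c l)%:R) ->
  lie u (\prod_(l < p) F l) = \sum_(k < p) (c k)%:R * \prod_(l < p.-1) F (bump k l).
Proof.
move=> uF; elim: p => [|p IHp]; first by rewrite !big_ord0 /lie mulr1 mul1r subrr.
rewrite big_ord_recr [RHS]big_ord_recr lieMr IHp uF mulr_suml /= -commr_nat.
congr (_ + _ * _); last by apply: eq_bigr => l _; rewrite /bump leqNgt ltn_ord.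
apply: eq_bigr => k _; rewrite -mulrA; congr (_ * _).
case: p k {IHp} => [[]//|p] k; rewrite big_ord_recr /=.
by rewrite /bump -ltnS ltn_ord.
Qed.

Lemma lieM_comm g d P Q : GRing.comm g P -> GRing.comm g Q -> GRing.comm d Q ->
  lie (g * d) (P * Q) = g * lie d P * Q.
Proof.
move=> gP gQ dQ; rewrite /lie mulrBr mulrBl !mulrA; congr (_ - _).
by rewrite -(mulrA P) -gQ mulrA -gP -(mulrA _ Q) -dQ !mulrA.
Qed.

Lemma anticommM_comm g d G P Q :
    GRing.comm g P -> GRing.comm g Q -> GRing.comm G P -> GRing.comm G d ->
    GRing.comm d Q ->
  g * d * (P * G * Q) + P * G * Q * (g * d)
  = g * G * lie d P * Q + (g * G + G * g) * P * d * Q.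
Proof.
move=> gP gQ GP Gd dQ; rewrite /lie mulrBr mulrBl !mulrDl !mulrA addrA subrK.
congr (_ + _).
  by rewrite -(mulrA _ P G) -GP !mulrA -(mulrA g d G) -Gd !mulrA.
rewrite -GP -(mulrA _ Q g) -gQ !mulrA -(mulrA G P g) -gP !mulrA.
by rewrite -(mulrA _ Q d) -dQ !mulrA.
Qed.

End Lie.

Section Monomials.
Variables (C : numClosedFieldType) (A : algType C) (n : nat).
Variables (eta : 'M[C]_n) (x d g : 'I_n -> A).
Hypothesis dd_comm : forall i j, d i * d j = d j * d i.
Hypothesis dx_lie : forall i j, d i * x j - x j * d i = (i == j)%:R.
Hypothesis gx_comm : forall i j, g i * x j = x j * g i.
Hypothesis gd_comm : forall i j, g i * d j = d j * g i.
Hypothesis gg_anticomm : forall i j, g i * g j + g j * g i = (2 * eta i j)%:A.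
Hypothesis eta_sym : forall i j, eta i j = eta j i.

Local Notation dup := (dup eta d).
Local Notation c := ('i / sqrtC 2 : C).

Definition wprod (f : 'I_n -> A) p (w : nat -> 'I_n) : A := \prod_(l < p) f (w l).

Lemma wprod0 f w : wprod f 0 w = 1.
Proof. exact: big_ord0. Qed.

Lemma wprod1 f w : wprod f 1 w = f (w 0%N).
Proof. exact: big_ord1. Qed.

Lemma wprodS f p w : wprod f p.+1 w = f (w 0%N) * wprod f p (w \o succn).
Proof. exact: big_ord_recl. Qed.

Lemma eq_wprod f p w1 w2 : (forall l, (l < p)%N -> w1 l = w2 l) ->
  wprod f p w1 = wprod f p w2.
Proof. by move=> w12; apply: eq_bigr => l _; rewrite w12. Qed.

Lemma comm_wprod y f p w : (forall i, GRing.comm y (f i)) -> GRing.comm y (wprod f p w).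
Proof. by move=> yf; apply: commr_prod => l _; apply: yf. Qed.

Definition eta_prod a (u : nat -> 'I_n) : C :=
  \prod_(k < a) eta (u (2 * k)%N) (u (2 * k + 1)%N).

Lemma eq_eta_prod a u v : (forall l, (l < 2 * a)%N -> v l = u l) ->
  eta_prod a v = eta_prod a u.
Proof.
by move=> vu; apply: eq_bigr => k _; have kb := ltn_ord k; rewrite !vu //; lia.
Qed.

Definition monomial a p q t (u : nat -> 'I_n) : A :=
  eta_prod a u *: (wprod x p (u \o addn (2 * a)) * wprod g q (u \o addn (2 * a + p)) *
    wprod dup t (u \o addn (2 * a + p + q))).

Lemma bracketE m (idx : 'I_m -> 'I_n) i0 a p q t : (2 * a + p + q + t)%N = m ->
  bracket eta x d g idx a p q t = ((2 ^ a * a`! * p`! * t`!)%N%:R)^-1 *: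
    \sum_(s : 'S_m) monomial a p q t (word idx i0 s).
Proof.
move=> hm; rewrite /bracket; congr (_ *: _); apply: eq_bigr => s _.
have wordE j : (j < m)%N ->
    (if insub j is Some k then Some (idx (s k)) else None) = Some (word idx i0 s j).
  by move=> jm; rewrite /word; case: insubP => //=; rewrite jm.
by congr (_ *: (_ * _ * _)); apply: eq_bigr => k _; have kb := ltn_ord k;
  rewrite !wordE //; lia.
Qed.

Lemma comm_g_dup i j : GRing.comm (g i) (dup j).
Proof.
by apply: commr_sum => k _; rewrite /GRing.comm -scalerAl -scalerAr gd_comm.
Qed.

Lemma comm_d_dup i j : GRing.comm (d i) (dup j).
Proof.
by apply: commr_sum => k _; rewrite /GRing.comm -scalerAl -scalerAr dd_comm.
Qed.

Lemma comm_g_xprod i p w : GRing.comm (g i) (wprod x p w).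
Proof. by apply: comm_wprod => j; apply: gx_comm. Qed.

Lemma comm_g_dprod i p w : GRing.comm (g i) (wprod dup p w).
Proof. by apply: comm_wprod => j; apply: comm_g_dup. Qed.

Lemma comm_d_dprod i p w : GRing.comm (d i) (wprod dup p w).
Proof. by apply: comm_wprod => j; apply: comm_d_dup. Qed.

Lemma lie_d_xprod i p w :
  lie (d i) (wprod x p w) = \sum_(k < p) (i == w k)%:R * wprod x p.-1 (w \o bump k).
Proof.
apply: (lie_prod_bump (F := x \o w) (c := fun l => nat_of_bool (i == w l))) => l.
exact: dx_lie.
Qed.

Lemma sum_delta (F : 'I_n -> A) j : \sum_i (i == j)%:R * F i = F j.
Proof.
under eq_bigr do rewrite mulr_natl mulrb.
by rewrite -big_mkcond big_pred1_eq.
Qed.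

Lemma lieZr (k : C) (u v : A) : lie u (k *: v) = k *: lie u v.
Proof. by rewrite /lie -scalerAl -scalerAr scalerBr. Qed.

Lemma adX_even b : adX d g false b = c *: \sum_i lie (g i * d i) b.
Proof.
by rewrite /adX expr0 mul1r /Xop -scalerAl -scalerAr -scalerBr mulr_suml mulr_sumr -sumrB.
Qed.

Lemma adX_odd b : adX d g true b = c *: \sum_i (g i * d i * b + b * (g i * d i)).
Proof.
rewrite /adX expr1 mulN1r mulNr opprK /Xop -scalerAl -scalerAr -scalerDr.
by rewrite mulr_suml mulr_sumr -big_split.
Qed.

Lemma adXZ par (k : C) b : adX d g par (k *: b) = k *: adX d g par b.
Proof.
rewrite /adX scalerBr; congr (_ - _); first by rewrite scalerAr.
by rewrite scalerAl scalerAr.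
Qed.

Lemma adX_sum par (I : Type) (r : seq I) (P : pred I) (F : I -> A) :
  adX d g par (\sum_(i <- r | P i) F i) = \sum_(i <- r | P i) adX d g par (F i).
Proof. by rewrite /adX mulr_sumr mulr_sumr mulr_suml -sumrB. Qed.

(* The contraction of X with the k-th letter x of a monomial: that letter
   becomes γ. *)
Definition adX_even_term a s t k (u : nat -> 'I_n) : A :=
  eta_prod a u *: (g (u (2 * a + k)%N) * wprod x s.-1 (u \o addn (2 * a) \o bump k) *
    wprod dup t (u \o addn (2 * a + s))).

Definition adX_odd_term a s t k (u : nat -> 'I_n) : A :=
  eta_prod a u *: (g (u (2 * a + k)%N) * g (u (2 * a + s)%N) *
    wprod x s.-1 (u \o addn (2 * a) \o bump k) * wprod dup t (u \o addn (2 * a + s + 1))).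

Lemma adX_even_monomial a s t u :
  adX d g false (monomial a s 0 t u) = c *: \sum_(k < s) adX_even_term a s t k u.
Proof.
rewrite adX_even /monomial wprod0 mulr1 addn0 -!scaler_sumr; congr (_ *: _).
under eq_bigr do rewrite lieZr (lieM_comm (comm_g_xprod _ _ _) (comm_g_dprod _ _ _)
  (comm_d_dprod _ _ _)) lie_d_xprod mulr_sumr mulr_suml.
rewrite -scaler_sumr exchange_big /=; congr (_ *: _); apply: eq_bigr => k _.
rewrite -(sum_delta (fun i => g i * _ * _)); apply: eq_bigr => i _.
by rewrite !mulrA commr_nat.
Qed.

Lemma adX_odd_monomial a s t u :
  adX d g true (monomial a s 1 t u) =
  c *: (2 *: monomial a s 0 t.+1 u + \sum_(k < s) adX_odd_term a s t k u).
Proof.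
pose P := wprod x s (u \o addn (2 * a)).
pose Q := wprod dup t (u \o addn (2 * a + s + 1)); pose j := u (2 * a + s)%N.
have -> : monomial a s 0 t.+1 u = eta_prod a u *: (P * dup j * Q).
  rewrite /monomial wprod0 mulr1 addn0 wprodS mulrA /=.
  congr (_ *: (_ * _)); first by rewrite addn0.
  by rewrite /Q; apply: eq_wprod => l _ /=; congr (u _); lia.
rewrite adX_odd /monomial wprod1 /= addn0 -/P -/Q -/j; congr (_ *: _).
under eq_bigr do rewrite -scalerAl -scalerAr -scalerDr (anticommM_comm (comm_g_xprod _ _ _)
  (comm_g_dprod _ _ _) (comm_g_xprod _ _ _) (gd_comm j _) (comm_d_dprod _ _ _))
  lie_d_xprod gg_anticomm.
rewrite -!scaler_sumr scalerA mulrC -scalerA -scalerDr big_split addrC /=.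
congr (_ *: (_ + _)).
  under eq_bigr do rewrite mulr_sumr mulr_suml.
  rewrite exchange_big /=; apply: eq_bigr => k _.
  rewrite -(sum_delta (fun i => g i * g j * _ * Q)); apply: eq_bigr => i _.
  by rewrite !mulrA commr_nat !mulrA.
rewrite /dup mulr_sumr mulr_suml scaler_sumr; apply: eq_bigr => i _.
by rewrite -!mulrA mulr_algl -scalerAl -scalerAr scalerA [eta j i]eta_sym.
Qed.

Lemma adX_even_term_move a s t k u v : (k < s)%N ->
    (forall l, v l = u (move (2 * a + k) (2 * a + s.-1) l)) ->
  adX_even_term a s t k u = monomial a s.-1 1 t v.
Proof.
move=> ks vE; rewrite /monomial wprod1 -comm_g_xprod (@eq_eta_prod a u v); last first.
  by move=> l la; rewrite vE move_small //; lia.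
congr (_ *: (_ * _ * _)); first by rewrite /= vE; congr (g (u _)); lia_move.
  by apply: eq_wprod => l ls /=; rewrite vE; congr (u _); lia_move.
by apply: eq_wprod => l ls /=; rewrite vE; congr (u _); lia_move.
Qed.

(* [monomial a.+1 p 0 t u] with its last factor η^{ij} replaced by γ^i γ^j. *)
Definition monomial_gg a p t (u : nat -> 'I_n) : A :=
  eta_prod a u *: (g (u (2 * a)%N) * g (u (2 * a + 1)%N) *
    wprod x p (u \o addn (2 * a + 2)) * wprod dup t (u \o addn (2 * a + 2 + p))).

Lemma adX_odd_term_move a s t k u v : (k < s)%N ->
    (forall l, v l = u (move (2 * a + k) (2 * a) (move (2 * a + s) (2 * a + 1) l))) ->
  adX_odd_term a s t k u = monomial_gg a s.-1 t v.
Proof.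
move=> ks vE; rewrite /monomial_gg (@eq_eta_prod a u v); last first.
  by move=> l la; rewrite vE !move_small //; lia.
congr (_ *: (_ * _ * _ * _)); try by rewrite vE; congr (g (u _)); lia_move.
  by apply: eq_wprod => l ls /=; rewrite vE; congr (u _); lia_move.
by apply: eq_wprod => l ls /=; rewrite vE; congr (u _); lia_move.
Qed.

Lemma monomial_gg_swap a p t u v : (forall l, v l = u (move (2 * a + 1) (2 * a) l)) ->
  monomial_gg a p t u + monomial_gg a p t v = 2 *: monomial a.+1 p 0 t u.
Proof.
move=> vE; rewrite /monomial_gg (@eq_eta_prod a u v); last first.
  by move=> l la; rewrite vE move_small //; lia.
have -> : v (2 * a)%N = u (2 * a + 1)%N by rewrite vE; congr u; lia_move.
have -> : v (2 * a + 1)%N = u (2 * a)%N by rewrite vE; congr u; lia_move.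
have -> : wprod x p (v \o addn (2 * a + 2)) = wprod x p (u \o addn (2 * a + 2)).
  by apply: eq_wprod => l _ /=; rewrite vE move_id //; lia.
have -> : wprod dup t (v \o addn (2 * a + 2 + p)) = wprod dup t (u \o addn (2 * a + 2 + p)).
  by apply: eq_wprod => l _ /=; rewrite vE move_id //; lia.
rewrite -scalerDr -!mulrDl gg_anticomm -!mulrA mulr_algl.
rewrite /monomial wprod0 mulr1 addn0 !scalerA /eta_prod big_ord_recr /= mulrCA.
by congr (_ *: (_ * _)); apply: eq_wprod => l _ /=; congr u; lia.
Qed.

Section Sums.
Variables (m : nat) (idx : 'I_m -> 'I_n) (i0 : 'I_n).
Local Notation word := (word idx i0).

Lemma sum_adX_even_term a s t k : (k < s)%N -> (2 * a + s + t)%N = m ->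
  \sum_(σ : 'S_m) adX_even_term a s t k (word σ)
  = \sum_(σ : 'S_m) monomial a s.-1 1 t (word σ).
Proof.
move=> ks hm; symmetry.
apply: (@sum_word_move _ _ idx i0 _ _ _ (2 * a + k) (2 * a + s.-1)); try lia.
by move=> u v vE; rewrite (adX_even_term_move t ks vE).
Qed.

Lemma sum_adX_odd_term a s t k : (k < s)%N -> (2 * a + s + 1 + t)%N = m ->
  \sum_(σ : 'S_m) adX_odd_term a s t k (word σ)
  = \sum_(σ : 'S_m) monomial_gg a s.-1 t (word σ).
Proof.
move=> ks hm; symmetry.
apply: (@sum_word_transport _ _ idx i0 _ _ _
  (move (2 * a + k) (2 * a) \o move (2 * a + s) (2 * a + 1))).
- by move=> l lm /=; rewrite !move_lt //; lia.
- by move=> l ml /=; rewrite !move_id //; lia.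
- by apply: in2W; apply: inj_comp; apply: move_inj.
- by move=> u v vE; rewrite (adX_odd_term_move t ks vE).
Qed.

Lemma sum_monomial_gg a p t : (2 * a + 2 + p + t)%N = m ->
  \sum_(σ : 'S_m) monomial_gg a p t (word σ)
  = \sum_(σ : 'S_m) monomial a.+1 p 0 t (word σ).
Proof.
move=> hm; apply: (@scalerI _ _ 2); first by rewrite pnatr_eq0.
have swap : \sum_(σ : 'S_m) monomial_gg a p t (word σ)
    = \sum_(σ : 'S_m) (2 *: monomial a.+1 p 0 t (word σ) - monomial_gg a p t (word σ)).
  apply: (@sum_word_move _ _ idx i0 _ _
    (fun u => 2 *: monomial a.+1 p 0 t u - monomial_gg a p t u) (2 * a + 1) (2 * a));
    try lia.
  by move=> u v vE; rewrite -(monomial_gg_swap _ _ vE) addrC addKr.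
by rewrite scaler_nat mulr2n {2}swap sumrB addrC subrK scaler_sumr.
Qed.

Lemma adX_bracket_even a s t : (0 < s)%N -> (2 * a + s + t)%N = m ->
  adX d g false (bracket eta x d g idx a s 0 t) = c *: bracket eta x d g idx a s.-1 1 t.
Proof.
case: s => // s _ hm.
have hm' : (2 * a + s + 1 + t)%N = m by lia.
have hm0 : (2 * a + s.+1 + 0 + t)%N = m by rewrite addn0.
rewrite (bracketE idx i0 hm') (bracketE idx i0 hm0) adXZ adX_sum.
under eq_bigr do rewrite adX_even_monomial.
rewrite -scaler_sumr exchange_big /=.
under eq_bigr => k _ do rewrite (sum_adX_even_term (ltn_ord k) hm).
rewrite sumr_const card_ord -scaler_nat !scalerA; congr (_ *: _).
rewrite factS !natrM; field.
by rewrite nat1r sqrtC_eq0 !pnatr_eq0 -!lt0n !fact_gt0 expn_gt0.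
Qed.

Lemma adX_bracket_odd a s t : (0 < s)%N -> (2 * a + s + 1 + t)%N = m ->
  adX d g true (bracket eta x d g idx a s 1 t) =
  (2 * 'i * (a.+1)%:R / sqrtC 2) *: bracket eta x d g idx a.+1 s.-1 0 t
  + (2 * 'i * (t.+1)%:R / sqrtC 2) *: bracket eta x d g idx a s 0 t.+1.
Proof.
case: s => // s _ hm.
have hm1 : (2 * a.+1 + s + 0 + t)%N = m by lia.
have hm2 : (2 * a + s.+1 + 0 + t.+1)%N = m by lia.
rewrite (bracketE idx i0 hm) (bracketE idx i0 hm1) (bracketE idx i0 hm2) adXZ adX_sum.
under eq_bigr do rewrite adX_odd_monomial.
rewrite -scaler_sumr big_split /= -scaler_sumr exchange_big /=.
under [X in _ + X]eq_bigr => k _ do rewrite (sum_adX_odd_term (ltn_ord k) hm).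
rewrite sumr_const card_ord sum_monomial_gg; last by lia.
rewrite -scaler_nat !scalerDr !scalerA addrC.
congr (_ *: _ + _ *: _); rewrite !factS ?expnS !natrM; field;
  by rewrite !nat1r sqrtC_eq0 !pnatr_eq0 -!lt0n !fact_gt0 expn_gt0.
Qed.

End Sums.

End Monomials.

Theorem lemma5p2 (C : numClosedFieldType) (A : algType C) (n : nat)
  (eta : 'M[C]_n) (x d g : 'I_n -> A) (m : nat) (idx : 'I_m -> 'I_n)
  (a r s t : nat) :
  (0 < n)%N -> eta^T = eta -> eta \in unitmx -> Wrel eta x d g ->
  (1 <= s)%N -> (2 * a + s + r + t)%N = m ->
  (r = 0%N ->
     adX d g (odd 0) (bracket eta x d g idx a s 0 t)
     = ('i / sqrtC 2) *: bracket eta x d g idx a s.-1 1 t) /\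
  (r = 1%N ->
     adX d g (odd 1) (bracket eta x d g idx a s 1 t)
     = (2 * 'i * (a.+1)%:R / sqrtC 2) *: bracket eta x d g idx a.+1 s.-1 0 t
       + (2 * 'i * (t.+1)%:R / sqrtC 2) *: bracket eta x d g idx a s 0 t.+1).
Proof.
move=> n_gt0 etaT _ [_ [dd [dx [gx [gd gg]]]]] s_gt0 hm.
have eta_sym i j : eta i j = eta j i by rewrite -[in LHS]etaT mxE.
pose i0 := Ordinal n_gt0.
split=> r_val; subst r.
  by apply: (adX_bracket_even eta dd dx gx gd idx i0); rewrite // -hm addn0.
exact: (adX_bracket_odd dd dx gx gd gg eta_sym idx i0).
Qed.
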